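(* If $A\| B$ is a right D2 algebra extension, then the extension $\rho:A^{\mathrm{op}}\to\mathcal E=\mathrm{End}({}_BA)$ is left D2 and left balanced. Explicitly, if $\gamma_j\in S,u_j\in T$ is a right D2 quasibase for $A\| B$, then $T_j:=\sum_k\big(x\mapsto\gamma_j(xu_k^1)u_k^2\big)\otimes_{\rho(A)}\gamma_k\in(\mathcal E\otimes_{\rho(A)}\mathcal E)^{\rho(A)}$ and $\mathcal B_j\in\mathrm{End}({}_{\rho(A)}\mathcal E_{\rho(A)})$, $\mathcal B_j(f)=u_j^1f(u_j^2-)$, form a left D2 quasibase: $f\otimes_{\rho(A)}g=\sum_jT_j^1\otimes T_j^2\circ\mathcal B_j(f)\circ g$ for all $f,g\in\mathcal E$.
   Context: Algebras over a commutative ring $K$; an algebra extension $C\| D$ is a unit-preserving homomorphism $D\to C$. For $A\| B$: $S=\mathrm{End}({}_BA_B)$, $\mathcal E=\mathrm{End}({}_BA)$ (composition), $T=(A\otimes_BA)^B$ with Sweedler notation $t=t^1\otimes t^2$; $\rho(a)(x)=xa$, so $\rho:A^{\mathrm{op}}\to\mathcal E$ is an algebra homomorphism. $C\| D$ is right D2 if $C\otimes_DC$ is isomorphic as $C$-$D$-bimodule to a direct summand of some finite direct sum $C^n$, left D2 if the same holds as $D$-$C$-bimodules. Right D2 quasibase of $A\| B$: finitely many $\gamma_j\in S,u_j\in T$ with $a\otimes_Ba'=\sum_ja\gamma_j(a')u_j^1\otimes u_j^2$; left D2 quasibase of $C\| D$: finitely many $\beta_i\in\mathrm{End}({}_DC_D)$,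 $t_i\in(C\otimes_DC)^D$ with $c\otimes_Dc'=\sum_it_i^1\otimes t_i^2\beta_i(c)c'$. $C\| D$ is left balanced if every additive map $h:C\to C$ commuting with all elements of $\mathrm{End}({}_DC)$ is left multiplication by an element of the image of $D$. *)

From HB Require Import structures.
From mathcomp Require Import all_boot all_order all_algebra.
From mathcomp Require Import boolp.
Set Implicit Arguments.
Unset Strict Implicit.
Unset Printing Implicit Defensive.
Import Order.TTheory GRing.Theory.
Local Open Scope ring_scope.

(* Elements of the tensor product C (x)_D C are represented by formal sums    *)
(* s : seq (C * C)  (s = sum_i s_i.1 (x) s_i.2); two formal sums represent    *)
(* the same tensor iff every D-balanced biadditive map agrees on them         *)
(* (universal property of the tensor product).                               *)

Definition balanced (D C : pzRingType) (phi : D -> C) (M : zmodType)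
  (beta : C -> C -> M) : Prop :=
  [/\ forall x1 x2 y, beta (x1 + x2) y = beta x1 y + beta x2 y,
      forall x y1 y2, beta x (y1 + y2) = beta x y1 + beta x y2 &
      forall x d y, beta (x * phi d) y = beta x (phi d * y)].

Definition tsum (C : Type) (M : zmodType) (beta : C -> C -> M)
  (s : seq (C * C)) : M := \sum_(p <- s) beta p.1 p.2.

Definition teq (D C : pzRingType) (phi : D -> C) (s t : seq (C * C)) : Prop :=
  forall (M : zmodType) (beta : C -> C -> M), balanced phi beta ->
    tsum beta s = tsum beta t.

Definition tlmul (C : pzRingType) (c : C) (s : seq (C * C)) : seq (C * C) :=
  [seq (c * p.1, p.2) | p <- s].
Definition trmul (C : pzRingType) (c : C) (s : seq (C * C)) : seq (C * C) :=
  [seq (p.1, p.2 * c) | p <- s].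

Definition rvlmul (C : pzRingType) n (c : C) (u : 'rV[C]_n) : 'rV[C]_n :=
  map_mx (fun a => c * a) u.
Definition rvrmul (C : pzRingType) n (u : 'rV[C]_n) (c : C) : 'rV[C]_n :=
  map_mx (fun a => a * c) u.

(* Right D2: C (x)_D C is isomorphic, as C-D-bimodule, to a direct summand of
   some C^n, i.e. there is a split monomorphism of C-D-bimodules
   f : C (x)_D C -> C^n (given by the balanced map beta, f(x (x) y) = beta x y)
   with a C-D-bimodule retraction g : C^n -> C (x)_D C. *)
Definition right_D2 (D C : pzRingType) (phi : D -> C) : Prop :=
  exists n (beta : C -> C -> 'rV[C]_n) (g : 'rV[C]_n -> seq (C * C)),
  [/\ balanced phi beta,
      forall c x y, beta (c * x) y = rvlmul c (beta x y) &
      forall x y d, beta x (y * phi d) = rvrmul (beta x y) (phi d)] /\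
  [/\ forall u v, teq phi (g (u + v)) (g u ++ g v),
      forall c u, teq phi (g (rvlmul c u)) (tlmul c (g u)),
      forall d u, teq phi (g (rvrmul u (phi d))) (trmul (phi d) (g u)) &
      forall s, teq phi (g (tsum beta s)) s].

(* Left D2: the same with D-C-bimodules. *)
Definition left_D2 (D C : pzRingType) (phi : D -> C) : Prop :=
  exists n (beta : C -> C -> 'rV[C]_n) (g : 'rV[C]_n -> seq (C * C)),
  [/\ balanced phi beta,
      forall d x y, beta (phi d * x) y = rvlmul (phi d) (beta x y) &
      forall x y c, beta x (y * c) = rvrmul (beta x y) c] /\
  [/\ forall u v, teq phi (g (u + v)) (g u ++ g v),
      forall d u, teq phi (g (rvlmul (phi d) u)) (tlmul (phi d) (g u)),
      forall c u, teq phi (g (rvrmul u c)) (trmul c (g u)) &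
      forall s, teq phi (g (tsum beta s)) s].

Definition left_balanced (D C : pzRingType) (phi : D -> C) : Prop :=
  forall h : C -> C, (forall x y, h (x + y) = h x + h y) ->
    (forall k : C -> C, (forall x y, k (x + y) = k x + k y) ->
        (forall d x, k (phi d * x) = phi d * k x) ->
        forall x, h (k x) = k (h x)) ->
    exists d, forall x, h x = phi d * x.

Record Eend (A B : pzRingType) (iota : {rmorphism B -> A}) := MkE {
  ef :> A -> A;
  ef_add : forall x y, ef (x + y) = ef x + ef y;
  ef_lin : forall b x, ef (iota b * x) = iota b * ef x }.

Record Send (A B : pzRingType) (iota : {rmorphism B -> A}) := MkS {
  sf :> A -> A;
  sf_add : forall x y, sf (x + y) = sf x + sf y;
  sf_lin : forall b x b', sf (iota b * x * iota b') = iota b * sf x * iota b' }.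

Section EndRing.
Variables (A B : pzRingType) (iota : {rmorphism B -> A}).
Local Notation E := (Eend iota).

Lemma Eend_ext (f g : E) : (forall x, f x = g x) -> f = g.
Proof.
case: f g => f fa fl [g ga gl] /= /funext eq; subst g.
by rewrite (Prop_irrelevance fa ga) (Prop_irrelevance fl gl).
Qed.

HB.instance Definition _ := gen_eqMixin E.
HB.instance Definition _ := gen_choiceMixin E.

Definition E0 : E := @MkE _ _ iota (fun _ => 0)
  (fun _ _ => esym (addr0 0)) (fun b _ => esym (mulr0 (iota b))).

Lemma Eopp_add (f : E) x y : - f (x + y) = - f x + - f y.
Proof. by rewrite ef_add opprD. Qed.
Lemma Eopp_lin (f : E) b x : - f (iota b * x) = iota b * - f x.
Proof. by rewrite ef_lin mulrN. Qed.
Definition Eopp (f : E) : E := MkE (Eopp_add f) (Eopp_lin f).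

Lemma Eadd_add (f g : E) x y : f (x + y) + g (x + y) = (f x + g x) + (f y + g y).
Proof. by rewrite !ef_add addrACA. Qed.
Lemma Eadd_lin (f g : E) b x : f (iota b * x) + g (iota b * x) = iota b * (f x + g x).
Proof. by rewrite !ef_lin mulrDr. Qed.
Definition Eadd (f g : E) : E := MkE (Eadd_add f g) (Eadd_lin f g).

Lemma EaddA : associative Eadd.
Proof. by move=> f g h; apply: Eend_ext => x /=; rewrite addrA. Qed.
Lemma EaddC : commutative Eadd.
Proof. by move=> f g; apply: Eend_ext => x /=; rewrite addrC. Qed.
Lemma Eadd0 : left_id E0 Eadd.
Proof. by move=> f; apply: Eend_ext => x /=; rewrite add0r. Qed.
Lemma EaddN : left_inverse E0 Eopp Eadd.
Proof. by move=> f; apply: Eend_ext => x /=; rewrite addNr. Qed.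

HB.instance Definition _ := GRing.isZmodule.Build E EaddA EaddC Eadd0 EaddN.

Definition E1 : E := @MkE _ _ iota id (fun _ _ => erefl) (fun _ _ => erefl).

Lemma Emul_add (f g : E) x y : f (g (x + y)) = f (g x) + f (g y).
Proof. by rewrite !ef_add. Qed.
Lemma Emul_lin (f g : E) b x : f (g (iota b * x)) = iota b * f (g x).
Proof. by rewrite !ef_lin. Qed.
Definition Emul (f g : E) : E := MkE (Emul_add f g) (Emul_lin f g).

Lemma EmulA : associative Emul.
Proof. by move=> f g h; apply: Eend_ext. Qed.
Lemma Emul1 : left_id E1 Emul.
Proof. by move=> f; apply: Eend_ext. Qed.
Lemma Emulr1 : right_id E1 Emul.
Proof. by move=> f; apply: Eend_ext. Qed.
Lemma EmulDl : left_distributive Emul Eadd.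
Proof. by move=> f g h; apply: Eend_ext. Qed.
Lemma EmulDr : right_distributive Emul Eadd.
Proof. by move=> f g h; apply: Eend_ext => x /=; rewrite ef_add. Qed.

HB.instance Definition _ :=
  GRing.Zmodule_isPzRing.Build E EmulA Emul1 Emulr1 EmulDl EmulDr.

Lemma EmulE (f g : E) x : (f * g) x = f (g x).
Proof. by []. Qed.
Lemma EaddE (f g : E) x : (f + g) x = f x + g x.
Proof. by []. Qed.

(* rho : A^op -> E,  rho(a)(x) = x a *)
Lemma rho_add (a : A) x y : (x + y) * a = x * a + y * a.
Proof. exact: mulrDl. Qed.
Lemma rho_lin (a : A) b x : (iota b * x) * a = iota b * (x * a).
Proof. by rewrite mulrA. Qed.
Definition rho (a : A^c) : E := MkE (rho_add a) (rho_lin a).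

Lemma sf_linl (g : Send iota) b x : g (iota b * x) = iota b * g x.
Proof. by have := sf_lin g b x 1; rewrite rmorph1 !mulr1. Qed.

Definition SE (g : Send iota) : E := MkE (sf_add g) (sf_linl g).

(* the element  x |-> g(x a) c  of E, for g in S *)
Lemma gac_add (g : Send iota) (a c : A) x y :
  g ((x + y) * a) * c = g (x * a) * c + g (y * a) * c.
Proof. by rewrite mulrDl sf_add mulrDl. Qed.
Lemma gac_lin (g : Send iota) (a c : A) b x :
  g ((iota b * x) * a) * c = iota b * (g (x * a) * c).
Proof. by rewrite -mulrA sf_linl mulrA. Qed.
Definition gac (g : Send iota) (a c : A) : E := MkE (gac_add g a c) (gac_lin g a c).

End EndRing.

Definition inT (A B : pzRingType) (iota : {rmorphism B -> A}) (u : seq (A * A)) :=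
  forall b, teq iota (tlmul (iota b) u) (trmul (iota b) u).

Definition right_D2_quasibase (A B : pzRingType) (iota : {rmorphism B -> A}) m
  (gam : 'I_m -> Send iota) (u : 'I_m -> seq (A * A)) : Prop :=
  (forall j, inT iota (u j)) /\
  forall a a' : A, teq iota [:: (a, a')]
    [seq (a * gam j a' * p.1, p.2) | j <- enum 'I_m, p <- u j].

Definition Tj (A B : pzRingType) (iota : {rmorphism B -> A}) m
  (gam : 'I_m -> Send iota) (u : 'I_m -> seq (A * A)) (j : 'I_m)
  : seq (Eend iota * Eend iota) :=
  [seq (gac (gam j) p.1 p.2, SE (gam k)) | k <- enum 'I_m, p <- u k].

From HB Require Import structures.
From mathcomp Require Import all_boot all_order all_algebra.
From mathcomp Require Import boolp.
Import GRing.Theory.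
Local Open Scope ring_scope.

(* Every h in E = End(_B A) decomposes through the quasibase as
     h = sum_l sum_(r in u_l) rho (r^1 h(r^2)) * gamma_l,
   so in E (x)_rho(A) E each right factor can be traded for the gamma_l by moving
   rho-factors across the tensor sign: a tensor sum_i f_i (x) g_i is determined by
   the values sum_i f_i (y g_i(w)), y, w in A.  In these terms the invariance of
   T_j and the left D2 quasibase identity for (T_j, B_j) become instances of the
   right D2 quasibase identity, and a left D2 quasibase exhibits E (x)_rho(A) E as
   a direct summand of E^m. *)

Section BalancedMaps.
Context {D C : pzRingType} {phi : D -> C}.

Lemma balanced_sumr {M : zmodType} {beta : C -> C -> M} : balanced phi beta ->
  forall (I : Type) (r : seq I) (P : pred I) (F : I -> C) x,
  beta x (\sum_(i <- r | P i) F i) = \sum_(i <- r | P i) beta x (F i).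
Proof.
case=> _ betaD _ I r P F x; apply: big_morph => [y z|]; first exact: betaD.
by apply: (addrI (beta x 0)); rewrite -betaD !addr0.
Qed.

Lemma balanced_suml {M : zmodType} {beta : C -> C -> M} : balanced phi beta ->
  forall (I : Type) (r : seq I) (P : pred I) (F : I -> C) y,
  beta (\sum_(i <- r | P i) F i) y = \sum_(i <- r | P i) beta (F i) y.
Proof.
case=> betaD _ _ I r P F y; apply: (big_morph (beta^~ y)) => [x z|]; first exact: betaD.
by apply: (addrI (beta 0 y)); rewrite -betaD !addr0.
Qed.

Lemma balanced_mulr {M : zmodType} {beta : C -> C -> M} c :
  balanced phi beta -> balanced phi (fun x y => beta x (y * c)).
Proof.
case=> betaDl betaDr betaM; split=> [x1 x2 y|x y1 y2|x d y]; first exact: betaDl.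
  by rewrite mulrDl betaDr.
by rewrite betaM mulrA.
Qed.

Lemma tsum_cat (M : zmodType) (beta : C -> C -> M) s t :
  tsum beta (s ++ t) = tsum beta s + tsum beta t.
Proof. exact: big_cat. Qed.

Lemma tsum_tlmul (M : zmodType) (beta : C -> C -> M) c s :
  tsum beta (tlmul c s) = \sum_(p <- s) beta (c * p.1) p.2.
Proof. exact: big_map. Qed.

Lemma tsum_trmul (M : zmodType) (beta : C -> C -> M) c s :
  tsum beta (trmul c s) = \sum_(p <- s) beta p.1 (p.2 * c).
Proof. exact: big_map. Qed.

Lemma tsum_big_additive {V M : zmodType} {g : V -> seq (C * C)} {beta : C -> C -> M} :
  balanced phi beta -> (forall v v', teq phi (g (v + v')) (g v ++ g v')) ->
  forall (I : Type) (r : seq I) (w : I -> V),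
  tsum beta (g (\sum_(i <- r) w i)) = \sum_(i <- r) tsum beta (g (w i)).
Proof.
move=> betaB gD I r w; have tsum_gD v v' : tsum beta (g (v + v')) =
    tsum beta (g v) + tsum beta (g v') by rewrite (gD _ _ _ _ betaB) tsum_cat.
apply: (big_morph (tsum beta \o g)) => [v v'|]; first exact: tsum_gD.
by apply: (addrI (tsum beta (g 0))); rewrite /= -tsum_gD !addr0.
Qed.

(* A left D2 quasibase (bq_j, t_j) of C || D makes C (x)_D C a direct summand of
   C^m via  x (x) y |-> (bq_j x * y)_j, with retraction  v |-> sum_j t_j v_j. *)
Lemma left_D2_of_quasibase m (bq : 'I_m -> C -> C) (t : 'I_m -> seq (C * C)) :
  (forall j x y, bq j (x + y) = bq j x + bq j y) ->
  (forall j d x, bq j (phi d * x) = phi d * bq j x) ->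
  (forall j x d, bq j (x * phi d) = bq j x * phi d) ->
  (forall j d, teq phi (tlmul (phi d) (t j)) (trmul (phi d) (t j))) ->
  (forall x y, teq phi [:: (x, y)]
     [seq (p.1, p.2 * bq j x * y) | j <- enum 'I_m, p <- t j]) ->
  left_D2 phi.
Proof.
move=> bqD bqMl bqMr tD qb.
pose beta x y : 'rV[C]_m := \row_j (bq j x * y).
pose g (v : 'rV[C]_m) := [seq (p.1, p.2 * v ord0 j) | j <- enum 'I_m, p <- t j].
have tsum_g (M : zmodType) (bt : C -> C -> M) v :
    tsum bt (g v) = \sum_(j <- enum 'I_m) \sum_(p <- t j) bt p.1 (p.2 * v ord0 j).
  exact: big_allpairs_dep.
exists m, beta, g; split; first split; first split.
- by move=> x1 x2 y; apply/matrixP => i j; rewrite !mxE bqD mulrDl.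
- by move=> x y1 y2; apply/matrixP => i j; rewrite !mxE mulrDr.
- by move=> x d y; apply/matrixP => i j; rewrite !mxE bqMr mulrA.
- by move=> d x y; apply/matrixP => i j; rewrite !mxE bqMl mulrA.
- by move=> x y c; apply/matrixP => i j; rewrite !mxE mulrA.
split=> [v v'|d v|c v|s] M bt btB.
- rewrite tsum_cat !tsum_g -big_split; apply: eq_bigr => j _.
  by rewrite -big_split; apply: eq_bigr => p _; rewrite mxE mulrDr; case: btB.
- rewrite tsum_g tsum_tlmul big_allpairs_dep; apply: eq_bigr => j _.
  have := tD j d M _ (balanced_mulr (v ord0 j) btB).
  rewrite tsum_tlmul tsum_trmul => ->.
  by apply: eq_bigr => p _; rewrite mxE mulrA.
- rewrite tsum_g tsum_trmul big_allpairs_dep.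
  by apply: eq_bigr => j _; apply: eq_bigr => p _; rewrite mxE mulrA.
- transitivity (\sum_(q <- s) tsum bt
      [seq (p.1, p.2 * bq j q.1 * q.2) | j <- enum 'I_m, p <- t j]); last first.
    by apply: eq_bigr => q _; rewrite -(qb q.1 q.2 _ _ btB) /tsum big_seq1.
  rewrite tsum_g /tsum; under [RHS]eq_bigr => q _ do rewrite big_allpairs_dep.
  rewrite exchange_big; apply: eq_bigr => j _.
  rewrite exchange_big; apply: eq_bigr => p _.
  rewrite summxE mulr_sumr (balanced_sumr btB).
  by apply: eq_bigr => q _; rewrite mxE mulrA.
Qed.

End BalancedMaps.

Section RhoExtension.
Context {A B : pzRingType} {iota : {rmorphism B -> A}}.
Local Notation E := (Eend iota).
Local Notation rho := (rho iota).

Lemma Eend_sumE (I : Type) (r : seq I) (P : pred I) (F : I -> E) x :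
  (\sum_(i <- r | P i) F i) x = \sum_(i <- r | P i) F i x.
Proof. exact: (big_morph (fun f : E => f x) (fun f g => erefl) erefl). Qed.

Lemma rho1 : rho (1 : A^c) = 1.
Proof. by apply: Eend_ext => x /=; rewrite mulr1. Qed.

(* h commutes with right multiplications in E and with f |-> rho (f 1), whence
   h f = h 1 * f and h 1 = rho (h 1 1). *)
Lemma rho_left_balanced : left_balanced rho.
Proof.
move=> h _ h_comm.
have hM (f e : E) : h (f * e) = h f * e.
  by apply: (h_comm (fun f => f * e)) => [x y|d x]; rewrite ?mulrDl ?mulrA.
have h1 : h 1 = rho (h 1 1 : A^c).
  have kD (f g : E) : rho ((f + g) 1 : A^c) = rho (f 1 : A^c) + rho (g 1 : A^c).
    by apply: Eend_ext => z /=; rewrite mulrDr.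
  have kM (d : A^c) (f : E) : rho ((rho d * f) 1 : A^c) = rho d * rho (f 1 : A^c).
    by apply: Eend_ext => z /=; rewrite mulrA.
  by have := h_comm _ kD kM 1; rewrite rho1.
by exists (h 1 1 : A^c) => f; rewrite -[f in h f]mul1r hM {1}h1.
Qed.

Section Quasibase.
Context {m : nat} {gam : 'I_m -> Send iota} {u : 'I_m -> seq (A * A)}.
Hypothesis qb : right_D2_quasibase gam u.

Lemma balanced_quasibaseE {M : zmodType} (beta : A -> A -> M) a a' : balanced iota beta ->
  beta a a' = \sum_(j <- enum 'I_m) \sum_(p <- u j) beta (a * gam j a' * p.1) p.2.
Proof.
by move=> betaB; have := qb.2 a a' M beta betaB; rewrite /tsum big_seq1 big_allpairs_dep.
Qed.

Lemma quasibase_gam j y z :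
  \sum_(k <- enum 'I_m) \sum_(p <- u k) gam j (y * gam k z * p.1) * p.2 = gam j y * z.
Proof.
rewrite -(balanced_quasibaseE (fun s t => gam j s * t)) //.
split=> [x1 x2 t|x t1 t2|x d t].
- by rewrite sf_add mulrDl.
- by rewrite mulrDr.
by have := sf_lin (gam j) 1 x d; rewrite rmorph1 !mul1r => ->; rewrite mulrA.
Qed.

Lemma quasibase_Eend (f : E) y v :
  \sum_(j <- enum 'I_m) \sum_(p <- u j) gam j y * p.1 * f (p.2 * v) = f (y * v).
Proof.
rewrite -[RHS]mul1r (balanced_quasibaseE (fun s t => s * f (t * v))).
  by apply: eq_bigr => j _; apply: eq_bigr => p _; rewrite mul1r.
split=> [x1 x2 t|x t1 t2|x d t]; first by rewrite mulrDl.
  by rewrite mulrDl ef_add mulrDr.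
by rewrite /= -mulrA -(mulrA (iota d)) ef_lin.
Qed.

Lemma Eend_quasibase_decomp (h : E) :
  h = \sum_(l <- enum 'I_m) \sum_(r <- u l) rho (r.1 * h r.2 : A^c) * SE (gam l).
Proof.
apply: Eend_ext => x; rewrite Eend_sumE -[x in h x]mulr1 -quasibase_Eend.
apply: eq_bigr => l _; rewrite Eend_sumE; apply: eq_bigr => r _.
by rewrite EmulE /= mulr1 mulrA.
Qed.

Lemma teq_rho_eval (s t : seq (E * E)) :
  (forall y w : A, \sum_(P <- s) P.1 (y * P.2 w) = \sum_(P <- t) P.1 (y * P.2 w)) ->
  teq rho s t.
Proof.
move=> st M beta betaB.
have tsum_decomp (s0 : seq (E * E)) : tsum beta s0 =
    \sum_(l <- enum 'I_m) \sum_(r <- u l)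
      beta (\sum_(P <- s0) P.1 * rho (r.1 * P.2 r.2 : A^c)) (SE (gam l)).
  transitivity (\sum_(P <- s0) \sum_(l <- enum 'I_m) \sum_(r <- u l)
      beta (P.1 * rho (r.1 * P.2 r.2 : A^c)) (SE (gam l))).
    apply: eq_bigr => P _; rewrite {1}(Eend_quasibase_decomp P.2) (balanced_sumr betaB).
    apply: eq_bigr => l _; rewrite (balanced_sumr betaB); apply: eq_bigr => r _.
    by case: betaB => _ _ ->.
  rewrite exchange_big; apply: eq_bigr => l _.
  by rewrite exchange_big; apply: eq_bigr => r _; rewrite (balanced_suml betaB).
rewrite !tsum_decomp; apply: eq_bigr => l _; apply: eq_bigr => r _; congr (beta _ _).
apply: Eend_ext => x; rewrite !Eend_sumE.
under eq_bigr => P _ do rewrite EmulE /= mulrA.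
by rewrite st; apply: eq_bigr => P _; rewrite EmulE /= mulrA.
Qed.

Lemma big_Tj (M : zmodType) (F : E * E -> M) j :
  \sum_(P <- Tj gam u j) F P =
  \sum_(k <- enum 'I_m) \sum_(p <- u k) F (gac (gam j) p.1 p.2, SE (gam k)).
Proof. exact: big_allpairs_dep. Qed.

Lemma Tj_invariant j (a : A^c) :
  teq rho (tlmul (rho a) (Tj gam u j)) (trmul (rho a) (Tj gam u j)).
Proof.
apply: teq_rho_eval => y w; rewrite !big_map !big_Tj /=.
rewrite -[RHS]/(\sum_(k <- enum 'I_m) \sum_(p <- u k)
                   gam j (y * gam k (w * a) * p.1) * p.2).
rewrite quasibase_gam mulrA -(quasibase_gam j y w) mulr_suml.
by apply: eq_bigr => k _; rewrite mulr_suml.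
Qed.

Definition Bq_fun j (f : E) (x : A) : A := \sum_(p <- u j) p.1 * f (p.2 * x).

Lemma Bq_fun_add j f x y : Bq_fun j f (x + y) = Bq_fun j f x + Bq_fun j f y.
Proof. by rewrite -big_split; apply: eq_bigr => p _; rewrite mulrDr ef_add mulrDr. Qed.

(* B-linearity comes from u_j being B-central in A (x)_B A. *)
Lemma Bq_fun_lin j f b x : Bq_fun j f (iota b * x) = iota b * Bq_fun j f x.
Proof.
have betaB : balanced iota (fun s t => s * f (t * x)).
  split=> [x1 x2 t|s t1 t2|s d t]; first by rewrite mulrDl.
    by rewrite mulrDl ef_add mulrDr.
  by rewrite /= -mulrA -(mulrA (iota d)) ef_lin.
have := qb.1 j b A _ betaB; rewrite tsum_tlmul tsum_trmul /Bq_fun mulr_sumr => uT.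
under eq_bigr => p _ do rewrite mulrA.
by rewrite -uT; apply: eq_bigr => p _; rewrite mulrA.
Qed.

Definition Bq j (f : E) : E := MkE (Bq_fun_add j f) (Bq_fun_lin j f).

Lemma BqD j (f g : E) : Bq j (f + g) = Bq j f + Bq j g.
Proof.
apply: Eend_ext => x; rewrite EaddE /= /Bq_fun -big_split.
by apply: eq_bigr => p _; rewrite EaddE mulrDr.
Qed.

Lemma BqMl j (a : A^c) f : Bq j (rho a * f) = rho a * Bq j f.
Proof.
apply: Eend_ext => x; rewrite !EmulE /= /Bq_fun mulr_suml.
by apply: eq_bigr => p _; rewrite mulrA.
Qed.

Lemma BqMr j f (a : A^c) : Bq j (f * rho a) = Bq j f * rho a.
Proof.
apply: Eend_ext => x; rewrite !EmulE /= /Bq_fun.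
by apply: eq_bigr => p _; rewrite mulrA.
Qed.

Lemma Tj_Bq_quasibase (f g : E) : teq rho [:: (f, g)]
  [seq (p.1, p.2 * Bq j f * g) | j <- enum 'I_m, p <- Tj gam u j].
Proof.
apply: teq_rho_eval => y w; rewrite big_seq1 big_allpairs_dep /= -quasibase_Eend.
apply: eq_bigr => j _; rewrite big_Tj /= quasibase_gam mulr_sumr.
by apply: eq_bigr => p _; rewrite mulrA.
Qed.

Lemma rho_left_D2 : left_D2 rho.
Proof.
exact: left_D2_of_quasibase BqD BqMl BqMr Tj_invariant Tj_Bq_quasibase.
Qed.

End Quasibase.
End RhoExtension.

Lemma rvlmul_sum_delta (C : pzRingType) n (c : C) (v : 'rV[C]_n) :
  rvlmul c v = \sum_(j <- enum 'I_n) rvlmul (c * v ord0 j) (delta_mx ord0 j).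
Proof.
have rvlmulE (a : C) (w : 'rV[C]_n) : rvlmul a w = a *: w.
  by apply/matrixP => i j; rewrite !mxE.
rewrite rvlmulE {1}(row_sum_delta v) scaler_sumr big_enum /=.
by apply: eq_bigr => j _; rewrite scalerA rvlmulE.
Qed.

(* gamma_j is the j-th coordinate of x |-> beta 1 x and u_j = g e_j, where beta and g
   embed A (x)_B A into A^n and retract back. *)
Lemma right_D2_quasibase_exists {A B : pzRingType} {iota : {rmorphism B -> A}} :
  right_D2 iota -> exists m (gam : 'I_m -> Send iota) (u : 'I_m -> seq (A * A)),
    right_D2_quasibase gam u.
Proof.
case=> n [beta [g [[betaB betaMl betaMr] [gD gMl gMr gK]]]].
have [_ betaDr betaM] := betaB.
have gam_add j x y : beta 1 (x + y) ord0 j = beta 1 x ord0 j + beta 1 y ord0 j.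
  by rewrite betaDr mxE.
have gam_lin j b x b' :
    beta 1 (iota b * x * iota b') ord0 j = iota b * beta 1 x ord0 j * iota b'.
  by rewrite betaMr -betaM mul1r -[iota b]mulr1 betaMl !mxE mulr1.
exists n, (fun j => MkS (gam_add j) (gam_lin j)), (fun j => g (delta_mx ord0 j)).
split=> [j b M bt btB|a a' M bt btB].
  rewrite -(gMl _ _ _ _ btB) -(gMr _ _ _ _ btB); congr (tsum _ (g _)).
  apply/matrixP => i k; rewrite !mxE.
  by case: (_ && _); rewrite ?mulr1 ?mul1r ?mulr0 ?mul0r.
rewrite -(gK _ _ _ btB) /tsum big_seq1 -[a in beta a]mulr1 betaMl rvlmul_sum_delta.
rewrite -/(tsum bt _) (tsum_big_additive btB gD) big_allpairs_dep.
by apply: eq_bigr => j _; rewrite (gMl _ _ _ _ btB) tsum_tlmul.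
Qed.

Theorem corollary5p2 (A B : pzRingType) (iota : {rmorphism B -> A}) :
  (right_D2 iota ->
     left_D2 (@rho A B iota) /\ left_balanced (@rho A B iota)) /\
  (forall m (gam : 'I_m -> Send iota) (u : 'I_m -> seq (A * A)),
     right_D2_quasibase gam u ->
     [/\ forall j (a : A^c), teq (@rho A B iota)
            (tlmul (rho iota a) (Tj gam u j)) (trmul (rho iota a) (Tj gam u j)) &
         exists Bq : 'I_m -> Eend iota -> Eend iota,
         [/\ forall j f x, Bq j f x = \sum_(p <- u j) p.1 * f (p.2 * x),
             forall j f g, Bq j (f + g) = Bq j f + Bq j g,
             forall j (a a' : A^c) f,
               Bq j (rho iota a * f * rho iota a') = rho iota a * Bq j f * rho iota a' &
             forall f g : Eend iota, teq (@rho A B iota) [:: (f, g)]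
               [seq (p.1, p.2 * Bq j f * g) | j <- enum 'I_m, p <- Tj gam u j]]]).
Proof.
split=> [rD2|m gam u qb].
  split; last exact: rho_left_balanced.
  have [m [gam [u qb]]] := right_D2_quasibase_exists rD2.
  exact: rho_left_D2 qb.
split; first exact: Tj_invariant.
exists (Bq qb); split=> // [j|j a a' f|]; first exact: BqD.
  by rewrite BqMr BqMl.
exact: Tj_Bq_quasibase.
Qed.
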